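(* Let $f:\mathbb{R}^2\to\mathbb{R}^2$ be a Topologically Anosov homeomorphism and $z_0\in\mathrm{Fix}(f)$. If there exists $x\neq z_0$ with $\alpha(x)=\omega(x)=\{z_0\}$, then there exist $y_0\neq z_0$ and $z\in\mathbb{R}^2$ such that $y_0\in\omega(z)$.
   Context: A homeomorphism $f:\mathbb{R}^2\to\mathbb{R}^2$ is Topologically Anosov (TA) if: (i) there is a continuous strictly positive $\epsilon:\mathbb{R}^2\to\mathbb{R}$ such that for all $x\neq y$ there is $k\in\mathbb{Z}$ with $\|f^k(x)-f^k(y)\|>\epsilon(f^k(x))$; and (ii) for every continuous strictly positive $\epsilon$ there is a continuous strictly positive $\delta$ such that every $\delta$-pseudo-orbit is $\epsilon$-shadowed by an orbit. A $\delta$-pseudo-orbit is a sequence $(x_n)_{n\in\mathbb{Z}}$ with $\|f(x_n)-x_{n+1}\|<\delta(f(x_n))$; it is $\epsilon$-shadowed by the orbit of $x$ if $\|x_n-f^n(x)\|<\epsilon(x_n)$ for all $n$. $\alpha(x),\omega(x)$ are the $\alpha$- and $\omega$-limit sets. *)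

From Stdlib Require Import Reals ZArith.
Open Scope R_scope.

Definition pt : Type := (R * R)%type.

Definition dist2 (p q : pt) : R :=
  sqrt ((fst p - fst q) ^ 2 + (snd p - snd q) ^ 2).

Definition cont_map (h : pt -> pt) : Prop :=
  forall x eps, 0 < eps -> exists d, 0 < d /\
    forall y, dist2 x y < d -> dist2 (h x) (h y) < eps.

Definition cont_fun (e : pt -> R) : Prop :=
  forall x eps, 0 < eps -> exists d, 0 < d /\
    forall y, dist2 x y < d -> Rabs (e x - e y) < eps.

Definition pos_cont (e : pt -> R) : Prop := cont_fun e /\ forall x, 0 < e x.

Definition homeo (f g : pt -> pt) : Prop :=
  cont_map f /\ cont_map g /\ (forall x, g (f x) = x) /\ (forall x, f (g x) = x).

Definition iterZ (f g : pt -> pt) (k : Z) (x : pt) : pt :=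
  match k with
  | Z0 => x
  | Zpos n => Nat.iter (Pos.to_nat n) f x
  | Zneg n => Nat.iter (Pos.to_nat n) g x
  end.

Definition pseudo_orbit (f : pt -> pt) (delta : pt -> R) (xs : Z -> pt) : Prop :=
  forall n : Z, dist2 (f (xs n)) (xs (n + 1)%Z) < delta (f (xs n)).

Definition shadows (f g : pt -> pt) (eps : pt -> R) (xs : Z -> pt) (x : pt) : Prop :=
  forall n : Z, dist2 (xs n) (iterZ f g n x) < eps (xs n).

Definition TA (f g : pt -> pt) : Prop :=
  homeo f g /\
  (exists eps, pos_cont eps /\
     forall x y, x <> y -> exists k : Z,
       dist2 (iterZ f g k x) (iterZ f g k y) > eps (iterZ f g k x)) /\
  (forall eps, pos_cont eps -> exists delta, pos_cont delta /\
     forall xs, pseudo_orbit f delta xs -> exists x, shadows f g eps xs x).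

Definition in_omega (f : pt -> pt) (x y : pt) : Prop :=
  forall eps, 0 < eps -> forall N : nat, exists n : nat,
    (N <= n)%nat /\ dist2 (Nat.iter n f x) y < eps.

Definition in_alpha (g : pt -> pt) (x y : pt) : Prop := in_omega g x y.

(** Following the orbit of [x] from a backward iterate close to [z0] to a forward
    iterate close to [z0] and then jumping back gives a periodic pseudo-orbit
    through [x].  An orbit [z] shadowing it at scale [d(x,z0)/2] comes back near
    [x] once per period, so by Bolzano-Weierstrass [omega(z)] contains a point
    within [d(x,z0)/2] of [x]; that point cannot be [z0]. *)
From Stdlib Require Import Reals ZArith Rgeom Lia Lra ClassicalEpsilon.
Open Scope R_scope.

Lemma dist2_dist_euc p q : dist2 p q = dist_euc (fst p) (snd p) (fst q) (snd q).
Proof. unfold dist2, dist_euc. now rewrite !Rsqr_pow2. Qed.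

Lemma dist2_refl p : dist2 p p = 0.
Proof. rewrite dist2_dist_euc. apply distance_refl. Qed.

Lemma dist2_sym p q : dist2 p q = dist2 q p.
Proof. rewrite !dist2_dist_euc. apply distance_symm. Qed.

Lemma dist2_triangle p q r : dist2 p r <= dist2 p q + dist2 q r.
Proof. rewrite !dist2_dist_euc. apply triangle. Qed.

Lemma dist2_pos p q : p <> q -> 0 < dist2 p q.
Proof.
  intros Hpq. rewrite dist2_dist_euc. unfold dist_euc.
  set (s := Rsqr (fst p - fst q) + Rsqr (snd p - snd q)).
  assert (Hs : 0 <= s) by (apply Rplus_le_le_0_compat; apply Rle_0_sqr).
  destruct (Rle_lt_or_eq_dec _ _ (sqrt_pos s)) as [Hlt | Heq]; [exact Hlt |].
  exfalso; apply Hpq.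
  destruct (Rplus_sqr_eq_0 _ _ (sqrt_eq_0 s Hs (eq_sym Heq))).
  destruct p, q; simpl in *; f_equal; lra.
Qed.

Lemma Rabs_fst_le_dist2 p q : Rabs (fst p - fst q) <= dist2 p q.
Proof.
  rewrite dist2_dist_euc, <- sqrt_Rsqr_abs. apply sqrt_le_1_alt.
  pose proof (Rle_0_sqr (snd p - snd q)). lra.
Qed.

Lemma Rabs_snd_le_dist2 p q : Rabs (snd p - snd q) <= dist2 p q.
Proof.
  rewrite dist2_dist_euc, <- sqrt_Rsqr_abs. apply sqrt_le_1_alt.
  pose proof (Rle_0_sqr (fst p - fst q)). lra.
Qed.

Lemma dist2_le_Rabs_sum p q : dist2 p q <= Rabs (fst p - fst q) + Rabs (snd p - snd q).
Proof.
  set (a := Rabs (fst p - fst q)); set (b := Rabs (snd p - snd q)).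
  assert (Ha : 0 <= a) by apply Rabs_pos. assert (Hb : 0 <= b) by apply Rabs_pos.
  rewrite dist2_dist_euc. unfold dist_euc.
  rewrite <- (sqrt_Rsqr (a + b)) by lra. apply sqrt_le_1_alt.
  rewrite (Rsqr_abs (fst p - fst q)), (Rsqr_abs (snd p - snd q)).
  fold a b. unfold Rsqr. nra.
Qed.

Definition cluster_point (u : nat -> pt) (y : pt) : Prop :=
  forall eps, 0 < eps -> forall N, exists n, (N <= n)%nat /\ dist2 (u n) y < eps.

Lemma cluster_point_subseq (u : nat -> pt) (phi : nat -> nat) y :
  (forall k, (k <= phi k)%nat) -> cluster_point (fun k => u (phi k)) y -> cluster_point u y.
Proof.
  intros Hphi Hy eps Heps N. destruct (Hy eps Heps N) as [k [Hk Hdist]].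
  exists (phi k). split; [specialize (Hphi k); lia | exact Hdist].
Qed.

Lemma cluster_point_closed_ball u y p c :
  cluster_point u y -> (forall n, dist2 p (u n) <= c) -> dist2 p y <= c.
Proof.
  intros Hy Hu. apply Rnot_lt_le; intros Hc.
  destruct (Hy (dist2 p y - c) ltac:(lra) 0%nat) as [n [_ Hn]].
  pose proof (dist2_triangle p (u n) y). specialize (Hu n). lra.
Qed.

Lemma real_bounded_cluster_point (u : nat -> R) a c :
  (forall n, Rabs (u n - a) <= c) ->
  exists l, forall eps, 0 < eps -> forall N, exists n, (N <= n)%nat /\ Rabs (u n - l) < eps.
Proof.
  intros Hu.
  destruct (Bolzano_Weierstrass u (fun y => a - c <= y <= a + c) (compact_P3 _ _)) as [l Hl].
  { intros n. specialize (Hu n).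
    pose proof (Rle_abs (u n - a)). pose proof (Rle_abs (- (u n - a))).
    rewrite Rabs_Ropp in *. lra. }
  exists l. intros eps Heps N.
  destruct (Hl (fun y => Rabs (y - l) < eps) N) as [n Hn].
  - exists (mkposreal eps Heps). intros y Hy. exact Hy.
  - exists n. exact Hn.
Qed.

(** Bolzano-Weierstrass in the plane, by extracting twice. *)
Lemma bounded_cluster_point (u : nat -> pt) p c :
  (forall n, dist2 p (u n) <= c) -> exists y, cluster_point u y.
Proof.
  intros Hu.
  destruct (real_bounded_cluster_point (fun n => fst (u n)) (fst p) c) as [l1 H1].
  { intros n. rewrite Rabs_minus_sym. eapply Rle_trans; [apply Rabs_fst_le_dist2 | apply Hu]. }
  destruct (choice (fun m n => (m <= n)%nat /\ Rabs (fst (u n) - l1) < / INR (S m)))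
    as [phi Hphi].
  { intros m. apply H1. apply Rinv_0_lt_compat, lt_0_INR. lia. }
  destruct (real_bounded_cluster_point (fun m => snd (u (phi m))) (snd p) c) as [l2 H2].
  { intros m. rewrite Rabs_minus_sym. eapply Rle_trans; [apply Rabs_snd_le_dist2 | apply Hu]. }
  exists (l1, l2). intros eps Heps N.
  destruct (archimed_cor1 (eps / 2) ltac:(lra)) as [K [HK HK0]].
  destruct (H2 (eps / 2) ltac:(lra) (Nat.max N K)) as [m [Hm Hsnd]].
  destruct (Hphi m) as [Hmphi Hfst].
  assert (/ INR (S m) <= / INR K).
  { apply Rinv_le_contravar; [apply lt_0_INR; lia | apply le_INR; lia]. }
  exists (phi m). split; [lia |].
  eapply Rle_lt_trans; [apply dist2_le_Rabs_sum |]. simpl in *. lra.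
Qed.

Lemma pos_cont_const c : 0 < c -> pos_cont (fun _ => c).
Proof.
  intros Hc. split; [| intros; exact Hc].
  intros p eps Heps. exists 1. split; [lra |].
  intros q _. rewrite Rminus_diag, Rabs_R0. exact Heps.
Qed.

Lemma pos_cont_near_ge_half e p :
  pos_cont e -> exists r, 0 < r /\ forall q, dist2 p q < r -> e p / 2 < e q.
Proof.
  intros [He Hpos]. pose proof (Hpos p).
  destruct (He p (e p / 2) ltac:(lra)) as [r [Hr Hnear]].
  exists r. split; [exact Hr |].
  intros q Hq. specialize (Hnear q Hq). apply Rabs_def2 in Hnear. lra.
Qed.

Lemma iterZ_of_nat f g n x : iterZ f g (Z.of_nat n) x = Nat.iter n f x.
Proof. destruct n; [reflexivity |]. simpl. now rewrite SuccNat2Pos.id_succ. Qed.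

Lemma iter_cancel (f g : pt -> pt) :
  (forall y, f (g y) = y) -> forall n x, Nat.iter n f (Nat.iter n g x) = x.
Proof.
  intros Hfg n. induction n as [| n IHn]; intros x; [reflexivity |].
  rewrite Nat.iter_succ_r, Nat.iter_succ, Hfg. apply IHn.
Qed.

Definition looped_orbit (f : pt -> pt) (P : nat) (w : pt) (n : Z) : pt :=
  Nat.iter (Z.to_nat (n mod Z.of_nat P)) f w.

Lemma looped_orbit_at f P w k j :
  (j < P)%nat -> looped_orbit f P w (Z.of_nat (k * P + j)) = Nat.iter j f w.
Proof.
  intros Hj. unfold looped_orbit.
  rewrite Nat2Z.inj_add, Nat2Z.inj_mul, Z.add_comm, Z_mod_plus_full, Z.mod_small by lia.
  now rewrite Nat2Z.id.
Qed.

Lemma looped_orbit_pseudo_orbit f (delta : pt -> R) P w :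
  (forall p, 0 < delta p) -> (0 < P)%nat ->
  dist2 (Nat.iter P f w) w < delta (Nat.iter P f w) ->
  pseudo_orbit f delta (looped_orbit f P w).
Proof.
  intros Hdelta HP Hjump n. unfold looped_orbit.
  pose proof (Z.mod_pos_bound n (Z.of_nat P) ltac:(lia)) as Hr.
  rewrite <- Z.add_mod_idemp_l by lia.
  destruct (Z.eq_dec (n mod Z.of_nat P + 1) (Z.of_nat P)) as [Hlast | Hinner].
  - rewrite Hlast, Z.mod_same by lia.
    rewrite <- Nat.iter_succ. replace (S (Z.to_nat (n mod Z.of_nat P))) with P by lia.
    exact Hjump.
  - rewrite (Z.mod_small (n mod Z.of_nat P + 1)) by lia.
    replace (Z.to_nat (n mod Z.of_nat P + 1)) with (S (Z.to_nat (n mod Z.of_nat P))) by lia.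
    rewrite dist2_refl. apply Hdelta.
Qed.

Lemma looped_homoclinic_pseudo_orbit (f g : pt -> pt) delta x z0 :
  (forall y, f (g y) = y) -> pos_cont delta -> in_alpha g x z0 -> in_omega f x z0 ->
  exists A P, (A < P)%nat /\ pseudo_orbit f delta (looped_orbit f P (Nat.iter A g x)).
Proof.
  intros Hfg Hdelta Halpha Homega.
  destruct (pos_cont_near_ge_half delta z0 Hdelta) as [r [Hr Hnear]].
  set (rho := Rmin r (delta z0 / 4)).
  assert (Hrho : 0 < rho) by (apply Rmin_pos; [lra | pose proof (proj2 Hdelta z0); lra]).
  destruct (Homega rho Hrho 1%nat) as [B [HB Hfwd]].
  destruct (Halpha rho Hrho 0%nat) as [A [_ Hbwd]].
  set (w := Nat.iter A g x) in *.
  exists A, (B + A)%nat. split; [lia |].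
  apply looped_orbit_pseudo_orbit; [apply Hdelta | lia |].
  rewrite Nat.iter_add, iter_cancel by exact Hfg. fold w.
  assert (Hr' : dist2 z0 (Nat.iter B f x) < r).
  { rewrite dist2_sym. eapply Rlt_le_trans; [exact Hfwd | apply Rmin_l]. }
  assert (rho <= delta z0 / 4) by apply Rmin_r.
  pose proof (dist2_triangle (Nat.iter B f x) z0 w). rewrite (dist2_sym z0 w) in *.
  specialize (Hnear _ Hr'). lra.
Qed.

Theorem mainTheorem12 (f g : pt -> pt) (z0 : pt) :
  TA f g -> f z0 = z0 ->
  (exists x, x <> z0 /\
     (forall y, in_alpha g x y <-> y = z0) /\
     (forall y, in_omega f x y <-> y = z0)) ->
  exists y0 z, y0 <> z0 /\ in_omega f z y0.
Proof.
  intros [[_ [_ [_ Hfg]]] [_ Hshadow]] _ [x [Hxz0 [Halpha Homega]]].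
  set (c := dist2 x z0 / 2).
  assert (Hc : 0 < c) by (pose proof (dist2_pos _ _ Hxz0); unfold c; lra).
  destruct (Hshadow _ (pos_cont_const c Hc)) as [delta [Hdelta Hshadow_c]].
  destruct (looped_homoclinic_pseudo_orbit f g delta x z0 Hfg Hdelta
              (proj2 (Halpha z0) eq_refl) (proj2 (Homega z0) eq_refl)) as [A [P [HAP Hpo]]].
  destruct (Hshadow_c _ Hpo) as [z Hz].
  set (u := fun k => Nat.iter (k * P + A) f z).
  assert (Hu : forall k, dist2 x (u k) <= c).
  { intros k. specialize (Hz (Z.of_nat (k * P + A))). cbv beta in Hz.
    rewrite looped_orbit_at, iterZ_of_nat, iter_cancel in Hz by assumption.
    unfold u. lra. }
  destruct (bounded_cluster_point u x c Hu) as [y Hy].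
  exists y, z. split.
  - intros ->. pose proof (cluster_point_closed_ball u z0 x c Hy Hu). unfold c in *. lra.
  - apply (cluster_point_subseq _ (fun k => (k * P + A)%nat)); [intros; nia | exact Hy].
Qed.
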